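(* Let $G$ and $H$ be groups and let $f:G\to H$ be a quasimorphism, i.e. a function whose defect set $D(f)=\{f(y)^{-1}f(x)^{-1}f(xy)\mid x,y\in G\}$ is finite. Suppose $f$ is symmetric ($f(x^{-1})=f(x)^{-1}$ for all $x\in G$) and unital ($f(e_G)=e_H$). If $\Xi$ is an approximate subgroup of $G$, then $f(\Xi)$ is an approximate subgroup of $H$.
   Context: A subset $\Lambda$ of a group $G$ is an approximate subgroup if $\Lambda=\Lambda^{-1}$, $e\in\Lambda$, and there exists a finite subset $F\subset G$ such that $\Lambda^2=\{ab\mid a,b\in\Lambda\}\subseteq\Lambda F$. *)

(* groups are MathComp's (possibly infinite) [groupType]
   from boot/monoid.v; subsets are predicates [G -> Prop]. *)
From HB Require Import structures.
From mathcomp Require Import all_boot.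
Set Implicit Arguments. Unset Strict Implicit. Unset Printing Implicit Defensive.
Local Open Scope group_scope.

Definition approx_subgroup (G : groupType) (L : G -> Prop) : Prop :=
  (forall x : G, L x <-> L x^-1) /\ L 1 /\
  exists F : seq G, forall a b : G, L a -> L b ->
    exists l f : G, [/\ L l, f \in F & a * b = l * f].

Definition defect_set (G H : groupType) (f : G -> H) : H -> Prop :=
  fun h => exists x y : G, h = (f y)^-1 * (f x)^-1 * f (x * y).

Definition finite_subset (T : eqType) (A : T -> Prop) : Prop :=
  exists s : seq T, forall t, A t -> t \in s.

Definition quasimorphism (G H : groupType) (f : G -> H) : Prop :=
  finite_subset (defect_set f).

Definition img_set (G H : Type) (f : G -> H) (A : G -> Prop) : H -> Prop :=
  fun h => exists2 x, A x & f x = h.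

(* If [a * b = l * c] with [a, b, l] in Xi and [c] in F, then
   [f a * f b = f (a * b) * d1^-1 = f l * (f c * d2 * d1^-1)] for two defects
   [d1, d2] of [f]; so the finitely many elements [f c * d2 * d1^-1] witness
   that [f(Xi)^2] is covered by right translates of [f(Xi)]. *)
From HB Require Import structures.
From mathcomp Require Import all_boot.
Set Implicit Arguments. Unset Strict Implicit. Unset Printing Implicit Defensive.
Local Open Scope group_scope.

Definition sqr_covered (G : groupType) (L : G -> Prop) (F : seq G) : Prop :=
  forall a b : G, L a -> L b ->
    exists l c : G, [/\ L l, c \in F & a * b = l * c].

Section Quasimorphism.

Variables (G H : groupType) (f : G -> H).

Definition defect (x y : G) : H := (f y)^-1 * (f x)^-1 * f (x * y).

Lemma defect_in_set x y : defect_set f (defect x y).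
Proof. by exists x, y. Qed.

Lemma mulf_defectV x y : f x * f y = f (x * y) * (defect x y)^-1.
Proof. by rewrite /defect !invgM !invgK !mulgA mulgV mul1g. Qed.

Lemma mulf_defect x y : f (x * y) = f x * (f y * defect x y).
Proof. by rewrite /defect !mulgA mulgK mulgV mul1g. Qed.

Lemma img_set_inv (L : G -> Prop) :
  (forall x, f x^-1 = (f x)^-1) -> (forall x, L x <-> L x^-1) ->
  forall h, img_set f L h <-> img_set f L h^-1.
Proof.
move=> fV LV; have imgV h : img_set f L h -> img_set f L h^-1.
  by case=> x Lx <-; exists x^-1; [apply/(LV x) | rewrite fV].
by move=> h; split=> [|/imgV]; [apply: imgV | rewrite invgK].
Qed.

Lemma img_set_sqr_covered (L : G -> Prop) (F : seq G) (s : seq H) :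
  (forall d, defect_set f d -> d \in s) -> sqr_covered L F ->
  sqr_covered (img_set f L)
    [seq e * d^-1 | e <- [seq f c * d | c <- F, d <- s], d <- s].
Proof.
move=> Ds LF _ _ [a La <-] [b Lb <-].
have [l [c [Ll Fc lc_ab]]] := LF a b La Lb.
exists (f l), (f c * defect l c * (defect a b)^-1); split.
- by exists l.
- by apply: allpairs_f; [apply: allpairs_f |] => //; apply/Ds/defect_in_set.
- by rewrite mulf_defectV lc_ab mulf_defect !mulgA.
Qed.

End Quasimorphism.

Theorem proposition3p17 (G H : groupType) (f : G -> H)
  (hqm : quasimorphism f)
  (hsym : forall x : G, f x^-1 = (f x)^-1)
  (hunit : f 1 = 1)
  (Xi : G -> Prop) (hXi : approx_subgroup Xi) :
  approx_subgroup (img_set f Xi).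
Proof.
have [XiV [Xi1 [F XiF]]] := hXi.
have [s Ds] := hqm.
split; first exact: img_set_inv hsym XiV.
split; first by exists 1.
by eexists; apply: img_set_sqr_covered Ds XiF.
Qed.
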